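(* Let $\mathbf{A}$ be a strictly simple algebra and let $e$ be a minimal idempotent of $\mathbf{A}$. Then $e$ is separating and dense for $\mathbf{A}$, and the localization $e(\mathbf{A})$ is a term minimal strictly simple algebra.
   Context: An algebra is strictly simple if it is finite, simple, and has no nontrivial proper subalgebras (i.e. every proper subalgebra has at most one element). A unary term $e$ of $\mathbf{A}$ is a minimal idempotent if its term operation is nonconstant, satisfies $e(e(x))=e(x)$, and its range is minimal (under inclusion) among the ranges of nonconstant idempotent unary term operations of $\mathbf{A}$. An algebra is term minimal if the term $x$ is a minimal idempotent, i.e. every idempotent unary term operation is either constant or the identity. The localization $e(\mathbf{A})$ is the algebra with universe $e(A)$ whose fundamental operations are the restrictions to $e(A)$ of the term operations $e(t(x_1,\dots,x_n))$, one for each term $t$ of $\mathbf{A}$. The term $e$ separates $\mathbf{A}$ if for all $a\neq b$ in $A$ there is a unary term $g$ with $e(g(a))\neq e(g(b))$; $e$ is dense for $\mathbf{A}$ if $\mathbf{A}$ is generated by $e(A)$. *)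

From HB Require Import structures.
From mathcomp Require Import all_boot.

Set Implicit Arguments.
Unset Strict Implicit.
Unset Printing Implicit Defensive.

Inductive term (S : Type) (ar : S -> nat) (V : Type) : Type :=
| Var : V -> term ar V
| App : forall s : S, ('I_(ar s) -> term ar V) -> term ar V.

Record algebra := Algebra {
  carrier :> finType;
  symb : Type;
  arity : symb -> nat;
  op : forall s : symb, ('I_(arity s) -> carrier) -> carrier }.

Fixpoint eval (A : algebra) (V : Type) (env : V -> A)
  (t : term (@arity A) V) {struct t} : A :=
  match t with
  | Var v => env v
  | App s args => @op A s (fun i => eval env (args i))
  end.

Definition uterm (A : algebra) := term (@arity A) unit.
Definition tfun (A : algebra) (t : uterm A) : A -> A :=
  fun x => eval (fun _ => x) t.

Definition nonconstant (T : eqType) (f : T -> T) := exists x y, f x != f y.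
Definition idem_fun (T : Type) (f : T -> T) := forall x, f (f x) = f x.
Definition frange (T : finType) (f : T -> T) : {set T} := [set f x | x : T].

Definition minimal_idempotent (A : algebra) (e : uterm A) :=
  [/\ nonconstant (tfun e), idem_fun (tfun e) &
    forall t : uterm A, nonconstant (tfun t) -> idem_fun (tfun t) ->
      frange (tfun t) \subset frange (tfun e) -> frange (tfun t) = frange (tfun e)].

Definition term_minimal (A : algebra) := minimal_idempotent (@Var (symb A) (@arity A) unit tt).

Definition congruence (A : algebra) (R : rel A) :=
  [/\ reflexive R, symmetric R, transitive R &
    forall (s : symb A) (a b : 'I_(arity s) -> A),
      (forall i, R (a i) (b i)) -> R (@op A s a) (@op A s b)].

Definition simple (A : algebra) :=
  1 < #|A| /\
  forall R : rel A, congruence R ->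
    (forall x y, R x y -> x = y) \/ (forall x y, R x y).

Definition subalgebra (A : algebra) (B : {set A}) :=
  forall (s : symb A) (a : 'I_(arity s) -> A),
    (forall i, a i \in B) -> @op A s a \in B.

(* finiteness is built into [algebra] *)
Definition strictly_simple (A : algebra) :=
  simple A /\ forall B : {set A}, subalgebra B -> B != setT -> #|B| <= 1.

Definition separates (A : algebra) (e : uterm A) :=
  forall a b : A, a != b -> exists g : uterm A, tfun e (tfun g a) != tfun e (tfun g b).

Definition dense (A : algebra) (e : uterm A) :=
  forall B : {set A}, subalgebra B -> frange (tfun e) \subset B -> B = setT.

Definition loc_carrier (A : algebra) (e : uterm A) : finType :=
  {x : A | x \in frange (tfun e)}.

Lemma loc_mem (A : algebra) (e : uterm A) (y : A) : tfun e y \in frange (tfun e).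
Proof. by apply/imsetP; exists y. Qed.

Definition loc_symb (A : algebra) := {n : nat & term (@arity A) 'I_n}.
Definition loc_arity (A : algebra) (s : loc_symb A) : nat := projT1 s.

Definition loc_op (A : algebra) (e : uterm A) (s : loc_symb A)
  (args : 'I_(loc_arity s) -> loc_carrier e) : loc_carrier e :=
  exist _ (tfun e (eval (fun i => val (args i)) (projT2 s))) (loc_mem e _).

Definition localization (A : algebra) (e : uterm A) : algebra :=
  @Algebra (loc_carrier e) (loc_symb A) (@loc_arity A) (@loc_op A e).

From mathcomp Require Import all_boot boolp.

(* Strict simplicity makes every subalgebra with two distinct elements the
   whole algebra, so e(A), which has two elements, generates A.  For
   separation and for the simplicity of e(A) one uses the compatible relation
   of pairs (t(a), t(b)) of values of one term at two tuples a, b: by density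
   it is reflexive as soon as every element of e(A) is such a common value
   t(a) = t(b), and then simplicity of A forces the congruence it generates to
   be trivial or total.  For term minimality, a nonconstant idempotent term t
   of e(A) lifts to the idempotent term e o t o e of A, whose range lies in
   e(A) and hence, by minimality of e, is all of e(A). *)

Set Implicit Arguments.
Unset Strict Implicit.
Unset Printing Implicit Defensive.

Fixpoint subst S (ar : S -> nat) V W (t : term ar V) (sg : V -> term ar W) : term ar W :=
  match t with
  | Var v => sg v
  | App _ args => App (fun i => subst (args i) sg)
  end.

Lemma eval_subst (A : algebra) V W (env : W -> A) (t : term (@arity A) V) sg :
  eval env (subst t sg) = eval (fun v => eval env (sg v)) t.
Proof.
by elim: t => [//|s args IH] /=; congr (@op A s _); apply: funext => i; apply: IH.
Qed.

Definition ucomp (A : algebra) (f g : uterm A) : uterm A := subst f (fun=> g).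

Lemma tfun_ucomp (A : algebra) (f g : uterm A) x : tfun (ucomp f g) x = tfun f (tfun g x).
Proof. exact: eval_subst. Qed.

Definition compatible (A : algebra) (R : A -> A -> Prop) :=
  forall s (a b : 'I_(arity s) -> A), (forall i, R (a i) (b i)) -> R (op a) (op b).

Section TermPairs.
Variables (A : algebra) (V : Type) (env1 env2 : V -> A).

Definition term_pairs (x y : A) :=
  exists t : term (@arity A) V, eval env1 t = x /\ eval env2 t = y.

Lemma term_pairs_var v : term_pairs (env1 v) (env2 v).
Proof. by exists (Var _ v). Qed.

Lemma term_pairs_compatible : compatible term_pairs.
Proof.
move=> s a b /fin_all_exists [ts tsP]; exists (App ts).
by split=> /=; congr (@op A s _); apply: funext => i; case: (tsP i).
Qed.

(* The values taken by one term at both environments; for [env1 = env2] this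
   is the subalgebra generated by the range of [env1]. *)
Definition common_values : {set A} := [set x | `[< term_pairs x x >]].

Lemma common_valuesP x : reflect (term_pairs x x) (x \in common_values).
Proof. by rewrite inE; apply: asboolP. Qed.

Lemma common_values_subalgebra : subalgebra common_values.
Proof.
move=> s a a_in; apply/common_valuesP/term_pairs_compatible => i.
exact/common_valuesP.
Qed.

End TermPairs.

Arguments common_values_subalgebra {A V env1 env2} [s a] _.

Lemma strictly_simple_subalgebraT (A : algebra) (B : {set A}) x y :
  strictly_simple A -> subalgebra B -> x \in B -> y \in B -> x != y -> B = setT.
Proof.
move=> [_ small] B_sub xB yB; apply: contraNeq => /(small _ B_sub)/card_le1_eqP.
by move=> /(_ x y xB yB) ->.
Qed.

Lemma unary_generator_or_fixed (A : algebra) (c : A) : strictly_simple A ->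
  (forall x, exists g : uterm A, tfun g c = x) \/ (forall g : uterm A, tfun g c = c).
Proof.
move=> A_ss; pose G := common_values (fun _ : unit => c) (fun=> c).
have inG (g : uterm A) : tfun g c \in G by apply/common_valuesP; exists g.
have [GT|GnT] := eqVneq G setT; [left|right].
  move=> x; have /common_valuesP [g [gx _]] : x \in G by rewrite GT inE.
  by exists g.
move=> g; apply: contraNeq GnT => gc; apply/eqP.
exact: strictly_simple_subalgebraT A_ss common_values_subalgebra
  (inG g) (inG (Var _ tt)) gc.
Qed.

Definition upd n T (a : 'I_n -> T) (j : 'I_n) (x : T) : 'I_n -> T :=
  fun i => if i == j then x else a i.

(* Replace the arguments of [op] by the new ones one index at a time. *)
Lemma compatible_of_translations (A : algebra) (R : rel A) :
  reflexive R -> transitive R ->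
  (forall s (a : 'I_(arity s) -> A) j x y, R x y -> R (op (upd a j x)) (op (upd a j y))) ->
  compatible R.
Proof.
move=> R_refl R_trans R_transl s a b ab.
pose mix k (i : 'I_(arity s)) := if i < k then b i else a i.
suff mixP k : k <= arity s -> R (op a) (op (mix k)).
  by have := mixP _ (leqnn _); congr (R _ (op _)); apply: funext => i; rewrite /mix ltn_ord.
elim: k => [|k IH] lt_k.
  by have -> : mix 0 = a by apply: funext.
apply: R_trans (IH (ltnW lt_k)) _; set j := Ordinal lt_k.
have upd_a : upd (mix k) j (a j) = mix k.
  by apply: funext => i; rewrite /upd /mix; case: eqP => // ->; rewrite ltnn.
have upd_b : upd (mix k) j (b j) = mix k.+1.
  apply: funext => i; rewrite /upd /mix [in RHS]ltnS [in RHS]leq_eqVlt.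
  have -> : (nat_of_ord i == k) = (i == j) by [].
  by case: eqP => [->|_]; rewrite ?eqxx.
by rewrite -upd_a -upd_b; apply/R_transl/ab.
Qed.

Section EquivalenceClosure.
Variables (A : algebra) (S : A -> A -> Prop).

Definition eqv_closure : rel A := connect [rel x y | `[< S x y >] || `[< S y x >]].

Lemma eqv_closure_sym : symmetric eqv_closure.
Proof. by apply: sym_connect_sym => x y /=; rewrite orbC. Qed.

Lemma eqv_closure_min (P : A -> A -> Prop) :
  (forall x, P x x) -> (forall x y, P x y -> P y x) ->
  (forall x y z, P x y -> P y z -> P x z) -> (forall x y, S x y -> P x y) ->
  forall x y, eqv_closure x y -> P x y.
Proof.
move=> P_refl P_sym P_trans SP x _ /connectP [p xp ->].
elim: p x xp => [|z p IH] x //= /andP [/orP xz /IH]; apply: P_trans.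
by case: xz => /asboolP /SP //; apply: P_sym.
Qed.

Lemma eqv_closure_translation (f : A -> A) : (forall x y, S x y -> S (f x) (f y)) ->
  forall x y, eqv_closure x y -> eqv_closure (f x) (f y).
Proof.
move=> fS; apply: eqv_closure_min => [x|x y|x y z|x y /fS Sxy].
- exact: connect0.
- by rewrite eqv_closure_sym.
- exact: connect_trans.
- by apply: connect1; rewrite /= asboolT.
Qed.

Hypotheses (S_refl : forall x, S x x) (S_compat : compatible S).

Lemma eqv_closure_congruence : congruence eqv_closure.
Proof.
have refl : reflexive eqv_closure by move=> x; apply: connect0.
have trans : transitive eqv_closure by move=> y x z; apply: connect_trans.
split=> //; first exact: eqv_closure_sym.
apply: (@compatible_of_translations _ eqv_closure) => // s a j x y.
apply: (@eqv_closure_translation (fun z => op (upd a j z))) => u v Suv.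
by apply: S_compat => i; rewrite /upd; case: eqP.
Qed.

End EquivalenceClosure.

(* In a simple algebra the congruence generated by a reflexive compatible
   relation [S] is trivial or total. *)
Lemma simple_compatible_dichotomy (A : algebra) (S P : A -> A -> Prop) : simple A ->
  (forall x, S x x) -> compatible S ->
  (forall x, P x x) -> (forall x y, P x y -> P y x) ->
  (forall x y z, P x y -> P y z -> P x z) -> (forall x y, S x y -> P x y) ->
  (forall x y, S x y -> x = y) \/ (forall x y, P x y).
Proof.
move=> [_ A_simple] S_refl S_compat P_refl P_sym P_trans SP.
case: (A_simple _ (eqv_closure_congruence S_refl S_compat)) => [triv|total]; [left|right].
  by move=> x y Sxy; apply: triv; apply: connect1; rewrite /= asboolT.
by move=> x y; apply: (eqv_closure_min P_refl P_sym P_trans SP); apply: total.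
Qed.

Section Localization.
Variables (A : algebra) (e : uterm A).

Definition loc_proj (x : A) : loc_carrier e := exist _ (tfun e x) (loc_mem e x).

Lemma loc_proj_val : idem_fun (tfun e) -> forall u : loc_carrier e, loc_proj (val u) = u.
Proof.
move=> e_idem [x xe]; apply: val_inj => /=.
by case/imsetP: (xe) => y _ ->; apply: e_idem.
Qed.

Fixpoint lift (t : uterm (localization e)) : uterm A :=
  match t with
  | Var _ => e
  | App s args => ucomp e (subst (projT2 s) (fun i => lift (args i)))
  end.

Lemma tfun_lift t x : tfun (lift t) x = val (tfun t (loc_proj x)).
Proof.
elim: t => [//|[n t0] args IH] /=.
rewrite tfun_ucomp /tfun eval_subst; congr (tfun e (eval _ t0)).
by apply: funext => i; apply: IH.
Qed.

Definition loc_symb_of (I : finType) (t : term (@arity A) I) : loc_symb A :=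
  existT _ #|I| (subst t (fun i => Var _ (enum_rank i))).

Lemma op_loc_symb_of (I : finType) (env : I -> loc_carrier e) (t : term (@arity A) I) :
  @op (localization e) (loc_symb_of t) (fun k => env (enum_val k))
  = loc_proj (eval (fun i => val (env i)) t).
Proof.
apply: val_inj; rewrite /= eval_subst; congr (tfun e (eval _ t)).
by apply: funext => i /=; rewrite enum_rankK.
Qed.

End Localization.

Section MinimalIdempotent.
Variables (A : algebra) (e : uterm A).
Hypotheses (A_ss : strictly_simple A) (e_min : minimal_idempotent e).

Let e_nonconst : nonconstant (tfun e). Proof. by case: e_min. Qed.
Let e_idem : idem_fun (tfun e). Proof. by case: e_min. Qed.

Lemma minimal_idempotent_dense : dense e.
Proof.
move=> B B_sub /subsetP eB; have [x [y exy]] := e_nonconst.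
by apply: (strictly_simple_subalgebraT A_ss B_sub _ _ exy); apply: eB; apply: imset_f.
Qed.

Lemma term_pairs_refl_of_range V (env1 env2 : V -> A) :
  frange (tfun e) \subset common_values env1 env2 -> forall x, term_pairs env1 env2 x x.
Proof.
move=> /(minimal_idempotent_dense common_values_subalgebra) CT x.
by apply/common_valuesP; rewrite CT inE.
Qed.

Lemma eq_of_generator_indistinguishable (a b : A) :
  (forall g, tfun e (tfun g a) = tfun e (tfun g b)) ->
  (forall x, exists g : uterm A, tfun g a = x) -> a = b.
Proof.
move=> ab_eq a_gen; pose S := term_pairs (fun _ : unit => a) (fun=> b).
have S_refl : forall x, S x x.
  apply: term_pairs_refl_of_range; apply/subsetP => _ /imsetP [y _ ->].
  have [g <-] := a_gen y; apply/common_valuesP; exists (ucomp e g).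
  by split; [|rewrite ab_eq]; apply: tfun_ucomp.
have S_e x y : S x y -> tfun e x = tfun e y by case=> t [<- <-]; apply: ab_eq.
have [S_diag|e_const] := simple_compatible_dichotomy A_ss.1 S_refl
  (@term_pairs_compatible _ _ _ _) (fun=> erefl) (fun _ _ => esym)
  (fun _ _ _ => @etrans _ _ _ _) S_e.
  exact/S_diag/term_pairs_var.
by have [x [y]] := e_nonconst; rewrite (e_const x y) eqxx.
Qed.

Lemma minimal_idempotent_separates : separates e.
Proof.
move=> a b /eqP neq_ab; apply: contrapT => no_sep; apply: neq_ab.
have ab_eq g : tfun e (tfun g a) = tfun e (tfun g b).
  by apply: contrapT => ne; apply: no_sep; exists g; apply/eqP.
case: (unary_generator_or_fixed a A_ss) => [a_gen|a_fix].
  exact: eq_of_generator_indistinguishable.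
case: (unary_generator_or_fixed b A_ss) => [b_gen|b_fix].
  by apply/esym/eq_of_generator_indistinguishable => // g; rewrite ab_eq.
by rewrite -(a_fix e) -(b_fix e); apply: (ab_eq (Var _ tt)).
Qed.

Lemma localization_two_points : exists u v : loc_carrier e, u != v.
Proof.
have [x [y exy]] := e_nonconst; exists (loc_proj e x), (loc_proj e y).
by apply: contraNneq exy => /(congr1 val) /= ->.
Qed.

Lemma localization_term_minimal : term_minimal (localization e).
Proof.
have range_id : frange (tfun (Var (@arity (localization e)) tt)) = setT.
  by apply/setP => w; rewrite inE; apply: imset_f.
split=> // [|t [u [v t_uv]] t_idem _].
  by have [u [v uv]] := localization_two_points; exists u, v.
rewrite range_id; apply/setP => w; rewrite inE.
have lift_nonconst : nonconstant (tfun (lift t)).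
  by exists (val u), (val v); rewrite !tfun_lift !loc_proj_val.
have lift_idem : idem_fun (tfun (lift t)).
  by move=> x; rewrite !tfun_lift loc_proj_val // t_idem.
have lift_range : frange (tfun (lift t)) \subset frange (tfun e).
  by apply/subsetP => _ /imsetP [x _ ->]; rewrite tfun_lift; apply: valP.
have [_ _ e_minimal] := e_min.
have /imsetP [x _ wx] : val w \in frange (tfun (lift t)).
  by rewrite (e_minimal _ lift_nonconst lift_idem lift_range) (valP w).
by apply/imsetP; exists (loc_proj e x) => //; apply: val_inj; rewrite -tfun_lift.
Qed.

Lemma localization_simple : simple (localization e).
Proof.
split.
  have [u [v uv]] := localization_two_points.
  by have := max_card [set u; v]; rewrite cards2 uv.
move=> R [R_refl R_sym R_trans R_compat].
case: (pselect (exists u v, R u v /\ u != v)) => [[u [v [Ruv uv]]]|R_triv]; last first.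
  by left=> x y Rxy; apply: contrapT => /eqP xy; apply: R_triv; exists x, y.
right; pose env1 o := val (odflt u o); pose env2 o := val (odflt v o).
have S_refl : forall x, term_pairs env1 env2 x x.
  apply: term_pairs_refl_of_range; apply/subsetP => x ex; apply/common_valuesP.
  by exists (Var _ (Some (exist _ x ex))).
have S_R x y : term_pairs env1 env2 x y -> R (loc_proj e x) (loc_proj e y).
  case=> t [<- <-]; rewrite -!op_loc_symb_of; apply: R_compat => k.
  by case: (enum_val k).
have P_sym x y : R (loc_proj e x) (loc_proj e y) -> R (loc_proj e y) (loc_proj e x).
  by rewrite R_sym.
have [S_diag|P_total] := simple_compatible_dichotomy A_ss.1 S_refl
  (@term_pairs_compatible _ _ _ _) (fun x => R_refl (loc_proj e x)) P_sym
  (fun x y z => @R_trans (loc_proj e y) (loc_proj e x) (loc_proj e z)) S_R.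
  have uv_val : val u = val v := S_diag _ _ (term_pairs_var env1 env2 None).
  by rewrite -val_eqE uv_val eqxx in uv.
by move=> x y; rewrite -(loc_proj_val e_idem x) -(loc_proj_val e_idem y); apply: P_total.
Qed.

Lemma localization_subalgebra_small (B : {set localization e}) :
  subalgebra B -> B != setT -> #|B| <= 1.
Proof.
move=> B_sub; apply: contraNleq => /card_gt1P [b1 [b2 [b1B b2B b12]]]; apply/eqP.
pose env (w : {w | w \in B}) := val (val w); pose G := common_values env env.
have inG w (wB : w \in B) : val w \in G by apply/common_valuesP; exists (Var _ (exist _ w wB)).
have GT : G = setT.
  by apply: strictly_simple_subalgebraT A_ss common_values_subalgebra
    (inG _ b1B) (inG _ b2B) _; rewrite val_eqE.
apply/setP => w; rewrite inE.
have /common_valuesP [t [tw _]] : val w \in G by rewrite GT inE.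
have := B_sub (loc_symb_of t) (fun k => val (enum_val k)) (fun k => valP (enum_val k)).
by rewrite op_loc_symb_of tw loc_proj_val.
Qed.

End MinimalIdempotent.

Theorem mainTheorem6 (A : algebra) (e : uterm A) :
  strictly_simple A -> minimal_idempotent e ->
  [/\ separates e, dense e,
      term_minimal (localization e) & strictly_simple (localization e)].
Proof.
move=> A_ss e_min; split.
- exact: minimal_idempotent_separates.
- exact: minimal_idempotent_dense.
- exact: localization_term_minimal.
- split; [exact: localization_simple | exact: localization_subalgebra_small].
Qed.
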